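(* Let $\mathbf{F}$ be a finite field with $q$ elements, let $n=r_1+\dots+r_s$ with $r_1,\dots,r_s>0$, and let $A=\operatorname{diag}(J_{r_1}(0),\dots,J_{r_s}(0))\in M_n(\mathbf{F})$. Consider the $q^n$ matrices obtained from $A$ by replacing its last column by an arbitrary column vector in $\mathbf{F}^n$. Then: (a) the number of nilpotent matrices among them equals the number of non-nilpotent semi-idempotent matrices among them, and both numbers equal $q^{n-r_s}$; (b) if $r_s>1$, then the number of nilpotent matrices among them of rank equal to $\operatorname{rank} A$ equals the number of non-nilpotent semi-idempotent matrices among them of rank equal to $\operatorname{rank} A$, and both numbers equal $q^{n-r_s-(s-1)}$.
   Context: $J_\ell(0)$ is the lower $\ell\times\ell$ Jordan block with eigenvalue $0$: entries $1$ directly below the diagonal and $0$ elsewhere. A square matrix $B$ is semi-idempotent if $\mathbf{F}^n=X\oplus Y$ with $X,Y$ $B$-stable, $B|_X$ the identity and $B|_Y$ nilpotent. *)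

From HB Require Import structures.
From mathcomp Require Import all_boot all_order all_algebra.
From mathcomp Require Import boolp.
Set Implicit Arguments. Unset Strict Implicit. Unset Printing Implicit Defensive.
Import GRing.Theory.
Local Open Scope ring_scope.

Definition jordan0 (F : nzRingType) (l : nat) : 'M[F]_l :=
  \matrix_(i < l, j < l) ((val i == (val j).+1)%N)%:R.

Definition jordan_diag (F : nzRingType) (m : nat) (r : 'I_m -> nat)
  : 'M[F]_(\sum_(i < m) r i) :=
  mxdiag (fun i => jordan0 F (r i)).

Definition repl_last_col (F : Type) (n : nat) (A : 'M[F]_n) (v : 'cV[F]_n)
  : 'M[F]_n :=
  \matrix_(i, j) if (val j == n.-1)%N then v i 0 else A i j.

Definition is_nilpotent (F : nzRingType) (n : nat) (B : 'M[F]_n) : Prop :=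
  exists k : nat, B ^+ k = 0.

(* Semi-idempotent: F^n = X (+) Y with X, Y B-stable, B|_X = id, B|_Y nilpotent.
   Subspaces of column vectors F^n are encoded (mxalgebra, row-space
   convention) by matrices whose rows are the transposed vectors; so
   "B x in X for x in X" is "X *m B^T <= X", etc. *)
Definition semi_idempotent (F : fieldType) (n : nat) (B : 'M[F]_n) : Prop :=
  exists X Y : 'M[F]_n,
    [/\ (X + Y :=: 1%:M)%MS /\ mxdirect (X + Y),
        stablemx X B^T, stablemx Y B^T,
        X *m B^T = X & exists k : nat, Y *m (B^T) ^+ k = 0].

From HB Require Import structures.
From mathcomp Require Import all_boot all_order all_algebra.
From mathcomp Require Import boolp zify.
Import GRing.Theory.
Local Open Scope ring_scope.
Set Implicit Arguments. Unset Strict Implicit. Unset Printing Implicit Defensive.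

(* Let p be the first index of the last Jordan block.  The matrix B obtained by
   replacing the last column of A by v sends e_j to e_(j+1) unless j+1 starts a
   block, and e_(n-1) to v.  The vectors vanishing on the last block form a
   B-stable subspace killed by B^p.  If v vanishes on the last block, B^(n-p)
   pushes everything into that subspace, so B is nilpotent.  Otherwise let j0 be
   the first index >= p with v_j0 <> 0: for vectors vanishing on [p, j0), the
   coordinates from j0 on are never all killed by a power of B.  Applied to e_j0
   this shows that B is not nilpotent, and applied to (B - 1) e_j0 it shows that
   B^N (B - 1) = 0 forces j0 = n - 1 and v_(n-1) = 1.  Conversely, if v equals
   e_(n-1) on the last block then B^(p+n) (B - 1) = 0, and B^N (B - 1) = 0 is
   semi-idempotence (take X = ker (B - 1), Y = im (B - 1)).  Finally
   rank B = rank A iff v lies in the column space of A, i.e. v vanishes at the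
   block starts.  Each condition prescribes v on r_s, resp. r_s + s - 1,
   coordinates (when r_s > 1 the index n - 1 is not a block start) and leaves
   the others free. *)

Lemma card_cV_prescribed (F : finZmodType) n (T : {set 'I_n}) (f : 'I_n -> F) :
  #|[set v : 'cV[F]_n | [forall i in T, v i 0 == f i]]| = (#|F| ^ (n - #|T|))%N.
Proof.
pose shift (g : {ffun 'I_n -> F}) : 'cV[F]_n := \col_i (g i + f i).
have shift_inj : injective shift.
  move=> g1 g2 /matrixP e; apply/ffunP => i.
  by have := e i 0; rewrite !mxE => /addIr.
have -> : [set v : 'cV[F]_n | [forall i in T, v i 0 == f i]] =
    shift @: [set g | g \in pffun_on 0 (~: T) predT].
  apply/setP => v; rewrite inE; apply/forall_inP/imsetP => [vT|[g]].
    exists [ffun i => v i 0 - f i]; last first.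
      by apply/matrixP => i c; rewrite (ord1 c) !mxE ffunE subrK.
    rewrite inE; apply/pffun_onP; split=> //; apply/subsetP => i.
    by rewrite !inE ffunE; apply: contraNN => /vT/eqP ->; rewrite subrr.
  rewrite inE => /pffun_onP[/subsetP supp _] -> i iT; rewrite mxE.
  suff -> : g i = 0 by rewrite add0r.
  by apply/eqP; apply: contraTT iT => /supp; rewrite !inE.
rewrite card_imset // cardsE card_pffun_on.
have := cardsC T; rewrite card_ord => card_TC.
by have -> : (n - #|T| = #|~: T|)%N by lia.
Qed.

Lemma repl_last_col_inj (F : Type) n (A : 'M[F]_n) : injective (repl_last_col A).
Proof.
case: n A => [|n] A v w e; apply/matrixP => i c; first by case: i.
have := congr1 (fun B : 'M[F]_n.+1 => B i ord_max) e.
by rewrite !mxE eqxx (ord1 c).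
Qed.

Lemma card_repl_last_col (F : finType) n (A : 'M[F]_n) (P : pred 'M[F]_n) :
  #|[set B in [set B | [exists v, B == repl_last_col A v]] | P B]| =
  #|[set v | P (repl_last_col A v)]|.
Proof.
rewrite -(card_imset _ (@repl_last_col_inj F n A)); apply: eq_card => B.
rewrite !inE; apply/andP/imsetP => [[/existsP[v /eqP ->] PB]|[v]].
  by exists v; rewrite ?inE.
by rewrite inE => Pv ->; split=> //; apply/existsP; exists v.
Qed.

Lemma card_repl_last_col_prescribed (F : finZmodType) n (A : 'M[F]_n)
    (P : pred 'M[F]_n) (T : {set 'I_n}) (f : 'I_n -> F) :
  (forall v, P (repl_last_col A v) <-> {in T, forall i, v i 0 = f i}) ->
  #|[set B in [set B | [exists v, B == repl_last_col A v]] | P B]| =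
  (#|F| ^ (n - #|T|))%N.
Proof.
move=> PE; rewrite card_repl_last_col -(card_cV_prescribed T f).
apply: eq_card => v; rewrite !inE; apply/idP/forall_inP => [/PE vT i /vT ->//|vT].
by apply/PE => i /vT/eqP.
Qed.

Lemma trmxX (R : comPzSemiRingType) n (M : 'M[R]_n) t : (M ^+ t)^T = M^T ^+ t.
Proof.
elim: t => [|t IH]; first by rewrite !expr0 trmx1.
by rewrite exprS exprSr -!mulmxE trmx_mul IH.
Qed.

Lemma mulmx_exprS (R : pzSemiRingType) n m (M : 'M[R]_n) t (x : 'M[R]_(n, m)) :
  M ^+ t.+1 *m x = M *m (M ^+ t *m x).
Proof. by rewrite exprS -mulmxE mulmxA. Qed.

Lemma semi_idempotentP (F : fieldType) n (B : 'M[F]_n) :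
  semi_idempotent B <-> exists N, B ^+ N * (B - 1) = 0.
Proof.
set C := B^T.
have trE N : (B ^+ N * (B - 1))^T = (C - 1) *m C ^+ N.
  by rewrite -mulmxE trmx_mul trmxX linearB /= trmx1.
have commC N : (C - 1) *m C ^+ N = C ^+ N *m (C - 1).
  by rewrite mulmxBl mulmxBr mulmx1 mul1mx mulmxE -exprS -exprSr.
have fixK (X : 'M[F]_n) : (X <= kermx (C - 1))%MS -> X *m C = X.
  by move/sub_kermxP/eqP; rewrite mulmxBr mulmx1 subr_eq0 => /eqP.
split=> [[X [Y [[XY _] _ _ XC [N YN]]]]|[N BN]].
  exists N; rewrite -/C in XC YN; apply: trmx_inj; rewrite trE trmx0.
  have /sub_addsmxP[[a b] /= ab] : (1%:M <= X + Y)%MS by rewrite XY.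
  have XC1 : X *m (C - 1) = 0 by rewrite mulmxBr XC mulmx1 subrr.
  rewrite -[C - 1]mul1mx ab mulmxDl -!mulmxA XC1 mulmx0 add0r.
  by rewrite -!mulmxA commC (mulmxA Y) YN mul0mx mulmx0.
have commC1 : (C - 1) *m C = C *m (C - 1) by rewrite mulmxBl mulmxBr mulmx1 mul1mx.
have CN : (C - 1) *m C ^+ N = 0 by rewrite -trE BN trmx0.
have XCK : (kermx (C - 1) :&: (C - 1) = 0)%MS.
  set Z := (kermx (C - 1) :&: (C - 1))%MS.
  have ZC : Z *m C = Z := fixK _ (capmxSl _ _).
  have ZCX t : Z *m C ^+ t = Z.
    by elim: t => [|t IH]; rewrite ?expr0 ?mulmx1 // exprSr -mulmxE mulmxA IH ZC.
  have /submxP[d Zd] : (Z <= C - 1)%MS := capmxSr _ _.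
  by rewrite -(ZCX N) Zd -mulmxA CN mulmx0.
exists (kermx (C - 1)), (C - 1); rewrite -/C; split.
- split; last by apply/mxdirect_addsP.
  apply/eqmxP; rewrite submx1 sub1mx /row_full.
  have := mxrank_sum_cap (kermx (C - 1)) (C - 1).
  rewrite XCK mxrank0 addn0 mxrank_ker => ->.
  by rewrite subnK ?rank_leq_row ?eqxx.
- by rewrite fixK.
- by rewrite commC1 submxMl.
- exact: fixK.
- by exists N.
Qed.

Lemma forall_in_setU (T : finType) (A B : {set T}) (P : T -> Prop) :
  {in A :|: B, forall x, P x} <-> {in A, forall x, P x} /\ {in B, forall x, P x}.
Proof.
split=> [h|[hA hB] x]; last by case/setUP; [exact: hA | exact: hB].
by split=> x xX; apply: h; rewrite inE xX ?orbT.
Qed.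

(* With S the set of first indices of the blocks, this is the block diagonal
   matrix of the nilpotent Jordan blocks. *)
Definition shift_mx (F : nzRingType) n (S : {set 'I_n}) : 'M[F]_n :=
  \matrix_(i, j) ((i == j.+1 :> nat) && (i \notin S))%:R.

Definition prev_ord n (i : 'I_n) : 'I_n :=
  Ordinal (leq_ltn_trans (leq_pred i) (ltn_ord i)).

Section ShiftWithLastColumn.

Variables (F : fieldType) (n p : nat) (S : {set 'I_n}).
Hypothesis S0 : forall i : 'I_n, i = 0%N :> nat -> i \in S.
Hypothesis S_last_block : forall i : 'I_n, (p <= i)%N -> (i \in S) = (i == p :> nat).
Hypothesis p_lt_n : (p < n)%N.

Local Notation A := (shift_mx F S).

Definition last_block : {set 'I_n} := [set i : 'I_n | (p <= i)%N].

(* Indexed by a nat, so that B^t e_j = e_(j+t) needs no ordinal casts. *)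
Definition unitcv (j : nat) : 'cV[F]_n := \col_(i < n) (i == j :> nat)%:R.

Let lst : 'I_n := Ordinal (etrans (ltn_predL n) (leq_ltn_trans (leq0n p) p_lt_n)).

Let lstE : lst = n.-1 :> nat. Proof. by []. Qed.

Let p_le_lst : (p <= lst)%N. Proof. by rewrite lstE; lia. Qed.

Let notin_S_gt0 (i : 'I_n) : i \notin S -> (0 < i)%N.
Proof. by rewrite lt0n; apply: contra => /eqP/S0. Qed.

Let last_block_notin_S (i : 'I_n) : (p <= i)%N -> i \notin S -> (p < i)%N.
Proof. by move=> pi; rewrite S_last_block // ltn_neqAle eq_sym pi andbT. Qed.

Lemma shift_mx_mul m (x : 'M[F]_(n, m)) i c :
  (A *m x) i c = if i \in S then 0 else x (prev_ord i) c.
Proof.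
rewrite mxE; case: ifP => iS.
  by apply: big1 => j _; rewrite mxE iS andbF mul0r.
have i_gt0 := notin_S_gt0 (negbT iS).
rewrite (bigD1 (prev_ord i)) //= mxE prednK // eqxx iS mul1r big1 ?addr0 // => j ji.
rewrite mxE iS andbT; case: eqP => [ij|_]; last by rewrite mul0r.
by case/eqP: ji; apply: val_inj; rewrite /= ij.
Qed.

Let shift_mx_last_col i : A i lst = 0.
Proof. by rewrite mxE lstE; case: eqP => //= e; have := ltn_ord i; lia. Qed.

Lemma card_last_block : #|last_block| = (n - p)%N.
Proof.
rewrite -sum1_card.
have := @big_geq_mkord _ 0 addn p n xpredT (fun _ => 1%N).
rewrite sum_nat_const_nat muln1 => ->.
by apply: eq_bigl => i; rewrite inE.
Qed.

Lemma card_last_block_setU : #|last_block :|: S| = (n - p + #|S|).-1.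
Proof.
have -> : (n - p + #|S| = #|last_block :|: S| + #|last_block :&: S|)%N.
  by rewrite cardsUI card_last_block.
suff -> : last_block :&: S = [set Ordinal p_lt_n] by rewrite cards1 addn1.
apply/setP => i; rewrite !inE -val_eqE /=.
by case: (leqP p i) => [pi|]; [rewrite S_last_block | case: eqP => // ->; rewrite ltnn].
Qed.

Section LastColumn.

Variable v : 'cV[F]_n.
Local Notation B := (repl_last_col A v).

Lemma repl_last_colE : B = A + v *m delta_mx 0 lst.
Proof.
apply/matrixP => i j; rewrite mxE [RHS]mxE [X in _ + X]mxE big_ord1 [delta_mx _ _ _ _]mxE.
rewrite -lstE (inj_eq val_inj) eqxx andTb.
by case: eqP => [->|_]; rewrite ?shift_mx_last_col ?add0r ?mulr1 // mulr0 addr0.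
Qed.

Lemma repl_last_col_mulE m (x : 'M[F]_(n, m)) i c :
  (B *m x) i c = (if i \in S then 0 else x (prev_ord i) c) + v i 0 * x lst c.
Proof.
rewrite repl_last_colE mulmxDl -mulmxA mxE shift_mx_mul; congr (_ + _).
by rewrite mxE big_ord1 -rowE mxE.
Qed.

Lemma repl_last_colX_mul_vanish_low m (x : 'M[F]_(n, m)) t :
    (forall (i : 'I_n) c, (p <= i)%N -> x i c = 0) ->
  forall (i : 'I_n) c, ((i < t) || (p <= i))%N -> (B ^+ t *m x) i c = 0.
Proof.
move=> x0; elim: t => [|t IH] i c; first by rewrite expr0 mul1mx => /x0.
move=> it; rewrite mulmx_exprS repl_last_col_mulE (IH lst) ?p_le_lst ?orbT //.
rewrite mulr0 addr0; case: ifP => iS //; apply: IH.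
have := notin_S_gt0 (negbT iS); case/orP: it => [it|pi] i_gt0; first by rewrite /=; lia.
by have := last_block_notin_S pi (negbT iS); rewrite /=; lia.
Qed.

Lemma repl_last_colX_mul_eq0 m (x : 'M[F]_(n, m)) s :
  (forall (i : 'I_n) c, (p <= i)%N -> x i c = 0) -> (p <= s)%N -> B ^+ s *m x = 0.
Proof.
move=> x0 ps; rewrite -(subnK ps) exprD -mulmxE -mulmxA.
suff -> : B ^+ p *m x = 0 by rewrite mulmx0.
apply/matrixP => i c; rewrite [RHS]mxE repl_last_colX_mul_vanish_low //.
by case: ltnP.
Qed.

Lemma repl_last_colX_mul_vanish_last_block m (x : 'M[F]_(n, m)) t :
    {in last_block, forall i, v i 0 = 0} ->
  forall (i : 'I_n) c, (p <= i < p + t)%N -> (B ^+ t *m x) i c = 0.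
Proof.
move=> v0; elim: t => [|t IH] i c.
  by rewrite addn0; case/andP => /leq_ltn_trans h /h; rewrite ltnn.
case/andP=> pi it; rewrite mulmx_exprS repl_last_col_mulE v0 ?inE // mul0r addr0.
case: ifP => iS //; apply: IH.
by have := last_block_notin_S pi (negbT iS); rewrite /=; lia.
Qed.

Lemma repl_last_col_nilpotent : {in last_block, forall i, v i 0 = 0} -> is_nilpotent B.
Proof.
move=> v0; exists (p + (n - p))%N.
rewrite exprD -mulmxE -[B ^+ (n - p)]mulmx1; apply: repl_last_colX_mul_eq0 => // i c pi.
by apply: repl_last_colX_mul_vanish_last_block => //; rewrite pi /=; have := ltn_ord i; lia.
Qed.

Lemma mulmx_unitcv k (M : 'M[F]_(k, n)) (j : 'I_n) i : (M *m unitcv j) i 0 = M i j.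
Proof.
rewrite mxE (bigD1 j) //= mxE eqxx mulr1 big1 ?addr0 // => l lj.
by rewrite mxE (inj_eq val_inj) (negbTE lj) mulr0.
Qed.

Lemma exists_first_nonzero : ~ {in last_block, forall i, v i 0 = 0} ->
  exists j0 : 'I_n, [/\ (p <= j0)%N, v j0 0 != 0 &
    forall i : 'I_n, (p <= i < j0)%N -> v i 0 = 0].
Proof.
move=> v_neq0; pose P (i : 'I_n) := (p <= i)%N && (v i 0 != 0).
have [i0 Pi0] : exists i0, P i0.
  case: (boolP [exists i, P i]) => [/existsP //|/existsPn nP].
  exfalso; apply: v_neq0 => i; rewrite inE => pi.
  by apply/eqP; have := nP i; rewrite /P pi negbK.
case: (arg_minnP (fun i : 'I_n => val i) Pi0) => j0 /andP[pj0 vj0] j0_min.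
exists j0; split=> // i /andP[pi ij0]; apply/eqP; apply: contraTT ij0 => vi.
by rewrite -leqNgt; apply: j0_min; rewrite /P pi.
Qed.

Lemma unitcv_vanish_below (j0 : 'I_n) (i : 'I_n) : (p <= i < j0)%N -> unitcv j0 i 0 = 0.
Proof. by case/andP=> _ ij0; rewrite mxE; case: eqP => // e; move: ij0; rewrite e ltnn. Qed.

Section FirstNonzero.

Variable j0 : 'I_n.
Hypotheses (p_le_j0 : (p <= j0)%N) (v_j0 : v j0 0 != 0).
Hypothesis v_below_j0 : forall i : 'I_n, (p <= i < j0)%N -> v i 0 = 0.

Lemma repl_last_col_mul_vanish_below (x : 'cV[F]_n) :
    (forall i : 'I_n, (p <= i < j0)%N -> x i 0 = 0) ->
  forall i : 'I_n, (p <= i < j0)%N -> (B *m x) i 0 = 0.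
Proof.
move=> x0 i /andP[pi ij0]; rewrite repl_last_col_mulE v_below_j0 ?pi // mul0r addr0.
case: ifP => iS //; apply: x0.
by have := last_block_notin_S pi (negbT iS); rewrite /=; lia.
Qed.

Lemma vanish_from_repl_last_col_mul (x : 'cV[F]_n) :
    (forall i : 'I_n, (p <= i < j0)%N -> x i 0 = 0) ->
    (forall i : 'I_n, (j0 <= i)%N -> (B *m x) i 0 = 0) ->
  forall i : 'I_n, (j0 <= i)%N -> x i 0 = 0.
Proof.
(* (B x)_j0 = v_j0 x_(n-1) forces x_(n-1) = 0; then (B x)_(i+1) = x_i for
   j0 <= i < n - 1. *)
move=> x0 Bx0.
have x_lst : x lst 0 = 0.
  have := Bx0 j0 (leqnn _); rewrite repl_last_col_mulE.
  have -> : (if j0 \in S then 0 else x (prev_ord j0) 0) = 0.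
    case: ifPn => // j0S; apply: x0; rewrite /=.
    by have := last_block_notin_S p_le_j0 j0S; have := notin_S_gt0 j0S; lia.
  by rewrite add0r => /eqP; rewrite mulf_eq0 (negbTE v_j0) => /eqP.
move=> i j0i; case: (ltnP i n.-1) => [ilst|]; last first.
  by move=> lsti; rewrite (_ : i = lst) //; apply: val_inj; have := ltn_ord i; rewrite /=; lia.
have i1n : (i.+1 < n)%N by lia.
have := Bx0 (Ordinal i1n) (leqW j0i).
rewrite repl_last_col_mulE x_lst mulr0 addr0 S_last_block /=; last by lia.
by rewrite ifN_eqC; [rewrite (_ : prev_ord _ = i) //; apply: val_inj | lia].
Qed.

Lemma vanish_from_repl_last_colX_mul t (x : 'cV[F]_n) :
    (forall i : 'I_n, (p <= i < j0)%N -> x i 0 = 0) ->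
    (forall i : 'I_n, (j0 <= i)%N -> (B ^+ t *m x) i 0 = 0) ->
  forall i : 'I_n, (j0 <= i)%N -> x i 0 = 0.
Proof.
elim: t x => [|t IH] x x0; first by rewrite expr0 mul1mx.
rewrite exprSr -mulmxE -mulmxA => Bx0.
apply: vanish_from_repl_last_col_mul => //.
by apply: IH Bx0; apply: repl_last_col_mul_vanish_below.
Qed.

End FirstNonzero.

Lemma repl_last_col_nilpotentP :
  is_nilpotent B <-> {in last_block, forall i, v i 0 = 0}.
Proof.
split=> [[t Bt0]|]; last exact: repl_last_col_nilpotent.
apply: contrapT => /exists_first_nonzero[j0 [pj0 vj0 v_below]].
have e_j0 : unitcv j0 j0 0 = 0.
  apply: (vanish_from_repl_last_colX_mul pj0 vj0 v_below (t := t)) => //.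
    exact: unitcv_vanish_below.
  by move=> i _; rewrite Bt0 mul0mx mxE.
by move: e_j0; rewrite mxE eqxx => /eqP; rewrite oner_eq0.
Qed.

Lemma repl_last_col_mul_unitcv (j : nat) :
  (p <= j)%N -> (j < n.-1)%N -> B *m unitcv j = unitcv j.+1.
Proof.
move=> pj jl; apply/matrixP => i c; rewrite (ord1 c) repl_last_col_mulE !mxE.
rewrite (_ : (lst == j :> nat) = false) ?mulr0 ?addr0; last by apply/negbTE; lia.
case: ifPn => [iS|/[dup]/notin_S_gt0 i_gt0 iS].
  case: eqP => // ij; move: iS; rewrite S_last_block ?ij //; lia.
by congr (_%:R); apply/eqP/eqP => /=; lia.
Qed.

Lemma repl_last_colX_mul_unitcv t (j : nat) :
  (p <= j)%N -> (j + t <= n.-1)%N -> B ^+ t *m unitcv j = unitcv (j + t).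
Proof.
elim: t j => [|t IH] j pj jt; first by rewrite expr0 mul1mx addn0.
rewrite exprSr -mulmxE -mulmxA repl_last_col_mul_unitcv; try lia.
by rewrite IH ?addSnnS //; lia.
Qed.

Lemma annihilated_repl_last_col_last_block :
  (exists N, B ^+ N * (B - 1) = 0) -> ~ is_nilpotent B ->
  {in last_block, forall i, v i 0 = (i == n.-1 :> nat)%:R}.
Proof.
move=> [N BN] /repl_last_col_nilpotentP /exists_first_nonzero[j0 [pj0 vj0 v_below]].
set y := (B - 1) *m unitcv j0.
have yE i : y i 0 = (B *m unitcv j0) i 0 - unitcv j0 i 0.
  by rewrite /y mulmxBl mul1mx [LHS]mxE [X in _ + X]mxE.
have y_below (i : 'I_n) : (p <= i < j0)%N -> y i 0 = 0.
  move=> ij0; rewrite yE (@unitcv_vanish_below j0) // subr0.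
  by apply: repl_last_col_mul_vanish_below ij0 => //; apply: unitcv_vanish_below.
have y_above : forall i : 'I_n, (j0 <= i)%N -> y i 0 = 0.
  apply: (vanish_from_repl_last_colX_mul pj0 vj0 v_below y_below (t := N)) => i _.
  by rewrite /y mulmxA mulmxE BN mul0mx mxE.
have [j0l|] := ltnP j0 n.-1.
  have := y_above j0 (leqnn _); rewrite yE repl_last_col_mul_unitcv // !mxE eqxx.
  by rewrite ltn_eqF // sub0r => /eqP; rewrite oppr_eq0 oner_eq0.
move=> lj0; have j0E : j0 = lst by apply: val_inj; have := ltn_ord j0; rewrite /=; lia.
move=> i; rewrite inE => pi; have [il|ilst] := ltnP i n.-1.
  by rewrite v_below ?pi ?j0E // (_ : (i == n.-1 :> nat) = false) //; apply/negbTE; lia.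
have iE : i = lst by apply: val_inj; have := ltn_ord i; rewrite /=; lia.
have := y_above j0 (leqnn _); rewrite yE mulmx_unitcv !mxE j0E iE -lstE !eqxx.
by move/eqP; rewrite subr_eq0 => /eqP.
Qed.

Section UnitLastBlock.

Hypothesis v_last : {in last_block, forall i, v i 0 = (i == n.-1 :> nat)%:R}.

Lemma repl_last_col_sub1_unitcv_vanish (j : 'I_n) : ((j < p) || (j == n.-1 :> nat))%N ->
  forall (i : 'I_n) c, (p <= i)%N -> ((B - 1) *m unitcv j) i c = 0.
Proof.
move=> hj i c pi; rewrite (ord1 c) mulmx_unitcv !mxE -val_eqE /=.
case/orP: hj => [jp|/eqP jl]; last by rewrite jl eqxx v_last ?inE // subrr.
have -> : (j == n.-1 :> nat) = false by apply/negbTE; have := p_le_lst; lia.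
have -> : (i == j :> nat) = false by apply/negbTE; lia.
rewrite subr0; case: eqP => //= ij; rewrite S_last_block //.
by have -> : (i == p :> nat) by apply/eqP; lia.
Qed.

Lemma repl_last_col_annihilated : B ^+ (p + n) * (B - 1) = 0.
Proof.
(* Column j of B - 1 vanishes on the last block unless p <= j < n - 1, and such
   e_j is carried to e_(n-1) by B^(n-1-j); B^p kills what vanishes there. *)
apply/matrixP => i j; rewrite -mulmx_unitcv [RHS]mxE -mulmxE -mulmxA.
have [/andP[pj jl]|jE] := boolP (p <= j < n.-1)%N; last first.
  rewrite repl_last_colX_mul_eq0 ?mxE ?leq_addr //.
  by apply: repl_last_col_sub1_unitcv_vanish; move: jE; have := ltn_ord j; lia.
have commB t : (B - 1) *m B ^+ t = B ^+ t *m (B - 1).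
  rewrite !mulmxE; apply: commrX; apply/commr_sym/commrB; [exact: commr_refl | exact: commr1].
rewrite -(subnK (_ : n.-1 - j <= p + n)%N); last by lia.
rewrite exprD -mulmxE -!mulmxA (mulmxA (B ^+ (n.-1 - j))) -commB -mulmxA.
rewrite repl_last_colX_mul_unitcv // subnKC ?(ltnW jl) //.
rewrite repl_last_colX_mul_eq0 ?mxE //; last by lia.
exact: (repl_last_col_sub1_unitcv_vanish (j := lst)) (introT orP (or_intror (eqxx _))).
Qed.

End UnitLastBlock.

Lemma repl_last_col_semi_idempotentP :
  semi_idempotent B /\ ~ is_nilpotent B <->
  {in last_block, forall i, v i 0 = (i == n.-1 :> nat)%:R}.
Proof.
split=> [[/semi_idempotentP BN nBN]|v_last]; first exact: annihilated_repl_last_col_last_block.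
split; first by apply/semi_idempotentP; exists (p + n)%N; apply: repl_last_col_annihilated.
move/repl_last_col_nilpotentP/(_ lst); rewrite inE p_le_lst v_last ?inE ?p_le_lst //.
by rewrite -lstE eqxx => /(_ isT)/eqP; rewrite oner_eq0.
Qed.

Lemma trmx_submx_shift_mxP : (v^T <= A^T)%MS <-> {in S, forall i, v i 0 = 0}.
Proof.
split=> [/submxP[D vD] i iS|v0].
  have := congr1 (fun M : 'rV_n => M 0 i) vD; rewrite /= !mxE => ->.
  by apply: big1 => l _; rewrite mxE mxE iS andbF mulr0.
apply/submxP; exists (\row_l v (insubd lst l.+1) 0).
apply: trmx_inj; rewrite trmx_mul !trmxK; apply/matrixP => i c.
rewrite (ord1 c) shift_mx_mul !mxE.
case: ifPn => [/v0 //|/notin_S_gt0 i_gt0]; congr (v _ 0); apply: val_inj.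
by rewrite val_insubd /= prednK // ltn_ord.
Qed.

Lemma repl_last_col_rankP : \rank B = \rank A <-> {in S, forall i, v i 0 = 0}.
Proof.
set d : 'rV[F]_n := delta_mx 0 lst.
have BtE : B^T = A^T + d^T *m v^T by rewrite repl_last_colE linearD /= trmx_mul.
have vtE : v^T = d *m B^T.
  apply/matrixP => z j; rewrite (ord1 z) -rowE !mxE -lstE eqxx.
  by [].
have BtE' : (B^T :=: A^T + v^T)%MS.
  apply/eqmxP/andP; split; first by rewrite BtE addmx_sub_adds ?submxMl.
  rewrite addsmx_sub vtE submxMl andbT.
  have -> : A^T = (1%:M - d^T *m d) *m B^T by rewrite mulmxBl mul1mx -mulmxA -vtE BtE addrK.
  exact: submxMl.
rewrite -mxrank_tr -(mxrank_tr A) BtE' -trmx_submx_shift_mxP.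
have [_ e] := mxrank_leqif_sup (addsmxSl A^T v^T).
rewrite addsmx_sub submx_refl /= in e.
by split => [h|h]; [rewrite -e h | apply/eqP; rewrite eq_sym e].
Qed.

Lemma repl_last_col_nilpotent_rankP :
  is_nilpotent B /\ \rank B = \rank A <-> {in last_block :|: S, forall i, v i 0 = 0}.
Proof.
apply: iff_trans (iff_sym (forall_in_setU _ _ _)).
by split=> [[/repl_last_col_nilpotentP ? /repl_last_col_rankP ?]|
            [/repl_last_col_nilpotentP ? /repl_last_col_rankP ?]].
Qed.

Lemma repl_last_col_semi_idempotent_rankP : (p < n.-1)%N ->
  (semi_idempotent B /\ ~ is_nilpotent B) /\ \rank B = \rank A <->
  {in last_block :|: S, forall i, v i 0 = (i == n.-1 :> nat)%:R}.
Proof.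
move=> p_lt_lst; apply: iff_trans (iff_sym (forall_in_setU _ _ _)).
have S_lst i : i \in S -> (i == n.-1 :> nat) = false.
  move=> iS; apply/negbTE; case: (leqP p i) => [pi|]; last by lia.
  by move: iS; rewrite S_last_block // => /eqP ->; lia.
have rankE : {in S, forall i, v i 0 = 0} <-> {in S, forall i, v i 0 = (i == n.-1 :> nat)%:R}.
  by split=> h i iS; rewrite h // S_lst.
split=> [[/repl_last_col_semi_idempotentP ? /repl_last_col_rankP/rankE ?]//|].
by case=> /repl_last_col_semi_idempotentP ? /rankE/repl_last_col_rankP.
Qed.

End LastColumn.
End ShiftWithLastColumn.

Section JordanBlocks.

Variables (k : nat) (r : 'I_k.+1 -> nat).
Hypothesis r_gt0 : forall i, (0 < r i)%N.
Local Notation n := (\sum_(i < k.+1) r i)%N.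

Definition block_starts : {set 'I_n} := [set s | tagnat.sig2 s == 0%N :> nat].

Let offset (i : 'I_k.+1) := (\sum_(l < k.+1 | (l < i)%N) r l)%N.

Let offsetE (s : 'I_n) : s = (offset (tagnat.sig1 s) + tagnat.sig2 s)%N :> nat.
Proof. exact: tagnat.rect. Qed.

Let RankE i (j : 'I_(r i)) : @tagnat.Rank _ r i j = (offset i + j)%N :> nat.
Proof. exact: tagnat.RankEsum. Qed.

Lemma jordan_diag_shift (F : nzRingType) : jordan_diag F r = shift_mx F block_starts.
Proof.
have blockE i j (a : 'I_(r i)) (b : 'I_(r j)) :
    (if i == j then conform_mx 0 (jordan0 F (r i)) else 0) a b =
    ((i == j) && (a == b.+1 :> nat))%:R.
  by case: eqP => [ij|_]; [subst j; rewrite conform_mx_id !mxE | rewrite mxE].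
apply/matrixP => s t; rewrite !mxE blockE inE; congr (nat_of_bool _)%:R.
have sE := offsetE s; have tE := offsetE t.
apply/andP/andP => [[/eqP st /eqnP s2]|[/eqnP st s2]].
  have := congr1 offset st; split; [apply/eqP; lia | by rewrite s2].
have lt : ((tagnat.sig2 s).-1 < r (tagnat.sig1 s))%N.
  exact: leq_ltn_trans (leq_pred _) (ltn_ord _).
have tR : @tagnat.Rank _ r _ (Ordinal lt) = t.
  apply: ord_inj; rewrite RankE /=; move: s2; rewrite -lt0n => /prednK a1.
  by apply: succn_inj; rewrite -addnS a1 -sE.
have t1 : tagnat.sig1 t = tagnat.sig1 s by rewrite -tR tagnat.Rank1K.
split; first by rewrite t1.
by apply/eqP; move: tE; rewrite -tR tagnat.Rank2K RankE /=; lia.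
Qed.

Lemma block_starts0 (s : 'I_n) : s = 0%N :> nat -> s \in block_starts.
Proof. by move=> s0; rewrite inE; have := offsetE s; lia. Qed.

Let offset_max : n = (offset ord_max + r ord_max)%N.
Proof.
rewrite (bigD1 ord_max) //= addnC; congr (_ + _)%N; apply: eq_bigl => i.
by rewrite -val_eqE /= ltn_neqAle -ltnS ltn_ord andbT.
Qed.

Lemma block_starts_last_block (s : 'I_n) : (n - r ord_max <= s)%N ->
  (s \in block_starts) = (s == (n - r ord_max)%N :> nat).
Proof.
have -> : (n - r ord_max = offset ord_max)%N by rewrite {1}offset_max addnK.
move=> le_s.
pose last_start := @tagnat.Rank _ r ord_max (Ordinal (r_gt0 ord_max)).
have s1 : tagnat.sig1 s = ord_max.
  have /tagnat.le_sig1 : (last_start <= s)%O by rewrite leEord RankE addn0.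
  rewrite tagnat.Rank1K leEord => max_le.
  by apply/val_inj/eqP; rewrite eqn_leq max_le -ltnS ltn_ord.
by rewrite inE; have := offsetE s; have := congr1 offset s1; lia.
Qed.

Lemma card_block_starts : #|block_starts| = k.+1.
Proof.
have -> : block_starts = [set @tagnat.Rank _ r i (Ordinal (r_gt0 i)) | i : 'I_k.+1].
  apply/setP => s; rewrite inE; apply/idP/imsetP => [/eqP s2|[i _ ->]].
    exists (tagnat.sig1 s) => //; rewrite -[LHS]tagnat.sig2K.
    by congr tagnat.Rank; apply: val_inj.
  by rewrite tagnat.Rank2K.
rewrite card_imset ?card_ord // => i j /(congr1 (@tagnat.sig1 _ r)).
by rewrite !tagnat.Rank1K.
Qed.

End JordanBlocks.

Theorem lemma3p1 (F : finFieldType) (k : nat) (r : 'I_k.+1 -> nat)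
  (hr : forall i, (0 < r i)%N) :
  let n := (\sum_(i < k.+1) r i)%N in
  let q := #|F| in
  let A : 'M[F]_n := jordan_diag F r in
  let M := [set B : 'M[F]_n | [exists v : 'cV[F]_n, B == repl_last_col A v]] in
  let Nil := [set B in M | `[< is_nilpotent B >]] in
  let SI := [set B in M | `[< semi_idempotent B >] && ~~ `[< is_nilpotent B >]] in
  (#|Nil| = #|SI| /\ #|SI| = q ^ (n - r ord_max))%N /\
  ((1 < r ord_max)%N ->
     #|[set B in Nil | \rank B == \rank A]| = #|[set B in SI | \rank B == \rank A]|
     /\ #|[set B in SI | \rank B == \rank A]| = (q ^ (n - r ord_max - k))%N).
Proof.
move=> n q A M Nil SI; set p := (n - r ord_max)%N.
have r_le_n : (r ord_max <= n)%N by rewrite /n (bigD1 ord_max) //= leq_addr.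
have p_lt_n : (p < n)%N by have := hr ord_max; lia.
have S0 := @block_starts0 k r; have Slast := block_starts_last_block hr.
have AE : A = shift_mx F (block_starts r) := @jordan_diag_shift k r F.
have count := @card_repl_last_col_prescribed F n A.
have setIdA (P Q : pred 'M[F]_n) :
  [set B in [set B in M | P B] | Q B] = [set B in M | P B && Q B].
  by apply/setP => B; rewrite !inE andbA.
have asbool_andE (P : Prop) (x y : nat) : `[< P >] && (x == y) <-> P /\ x = y.
  split=> [/andP[/asboolP ? /eqP ?] | [? ?]] //.
  by apply/andP; split; [exact/asboolP | exact/eqP].
have cardNil : #|Nil| = (q ^ (n - #|last_block n p|))%N.
  by apply: count => v; rewrite asboolE AE; exact: repl_last_col_nilpotentP.
have cardSI : #|SI| = (q ^ (n - #|last_block n p|))%N.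
  apply: count => v; rewrite -asbool_neg -asbool_and asboolE AE.
  exact: repl_last_col_semi_idempotentP.
rewrite cardNil cardSI card_last_block subKn ?leq_subr //; split=> // r_gt1.
have p_lt_lst : (p < n.-1)%N by lia.
set T := last_block n p :|: block_starts r.
have cardNilR : #|[set B in Nil | \rank B == \rank A]| = (q ^ (n - #|T|))%N.
  rewrite setIdA; apply: count => v; rewrite AE; apply: iff_trans (asbool_andE _ _ _) _.
  exact: repl_last_col_nilpotent_rankP.
have cardSIR : #|[set B in SI | \rank B == \rank A]| = (q ^ (n - #|T|))%N.
  rewrite setIdA; apply: count => v; rewrite AE -asbool_neg -asbool_and.
  apply: iff_trans (asbool_andE _ _ _) _; exact: repl_last_col_semi_idempotent_rankP.
rewrite cardNilR cardSIR card_last_block_setU // card_block_starts //.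
by split=> //; congr (_ ^ _)%N; lia.
Qed.
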